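(* Let $n,a,h,t$ be positive integers with $h\le n$ and $a\le t\le ah$. Let $\mathcal C\subseteq\mathbb Z^n$ be an $(a,h,t)$-AED code in $\mathbb Z^n$. Then its upper density satisfies $\overline{\mu}(\mathcal C)\le \frac{1}{t+1}$.
   Context: Channel over the alphabet $\mathbb Z$: an input $\mathbf x=(x_1,\dots,x_n)\in\mathbb Z^n$ can produce any output $\mathbf y\in\mathbb Z^n$ satisfying (1) $0\le y_i-x_i\le a$ for all $i$; (2) $\sum_{i=1}^n \mathbb 1_{\{y_i\ne x_i\}}\le h$; (3) $\sum_{i=1}^n (y_i-x_i)\le t$. Such error vectors $\mathbf y-\mathbf x$ are called $(a,h,t)$-asymmetric errors, and $\mathrm{Out}(\mathbf x)$ denotes the set of all such outputs $\mathbf y$. A code $\mathcal C\subseteq\mathbb Z^n$ is an $(a,h,t)$-AED (asymmetric-error-detecting) code if for all $\mathbf x\in\mathcal C$ and all $\mathbf y\in\mathrm{Out}(\mathbf x)$ with $\mathbf y\neq\mathbf x$, we have $\mathbf y\notin\mathcal C$. The upper density of $\mathcal C\subseteq\mathbb Z^n$ is $\overline{\mu}(\mathcal C)=\limsup_{k\to\infty}\frac{|\mathcal C\cap\{-k,\dots,k\}^n|}{(2k+1)^n}$. *)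

From HB Require Import structures.
From mathcomp Require Import all_boot all_order all_algebra.
Set Implicit Arguments. Unset Strict Implicit. Unset Printing Implicit Defensive.
Import Order.TTheory GRing.Theory Num.Theory.
Local Open Scope ring_scope.

Definition vec (n : nat) := {ffun 'I_n -> int}.

Definition asym_err (n a h t : nat) (e : 'I_n -> int) : bool :=
  [&& [forall i, (0 <= e i) && (e i <= a%:Z)],
      (#|[set i | e i != 0]| <= h)%N &
      (\sum_(i < n) e i <= t%:Z)].

Definition in_Out (n a h t : nat) (x y : vec n) : bool :=
  asym_err a h t (fun i => y i - x i).

Definition AED (n a h t : nat) (C : pred (vec n)) : Prop :=
  forall x y : vec n, C x -> in_Out a h t x y -> y != x -> ~~ C y.

(* |C ∩ {-k,...,k}^n| : points of the box are parametrised by v i - k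
   with v i in 'I_(2k+1). *)
Definition box_count (n : nat) (C : pred (vec n)) (k : nat) : nat :=
  #|[set v : {ffun 'I_n -> 'I_(k.*2.+1)} |
      C [ffun i => (v i)%:Z - k%:Z]]|.

Definition box_ratio (n : nat) (C : pred (vec n)) (k : nat) : rat :=
  (box_count C k)%:R / ((k.*2.+1) ^ n)%:R.

(* limsup_{k->oo} u k <= L  (the sequence is bounded, so this is the usual
   meaning of the upper density being at most L). *)
Definition limsup_le (u : nat -> rat) (L : rat) : Prop :=
  forall eps : rat, 0 < eps -> exists K : nat, forall k : nat, (K <= k)%N -> u k <= L + eps.

From mathcomp Require Import all_boot all_order all_algebra.
From mathcomp Require Import zify ring.
From Stdlib Require Import FunctionalExtensionality.
Import Order.TTheory GRing.Theory Num.Theory.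
Local Open Scope ring_scope.

(* The staircase vector s_j = (min(a, j), min(a, j - a), min(a, j - 2a), ...)
   fills the coordinates one after the other, a units each, until its weight is
   j.  For j1 < j2 <= t <= a h the difference s_j2 - s_j1 is an
   (a,h,t)-asymmetric error, so every chain w + s_0, ..., w + s_t contains at
   most one codeword.  Letting w range over a box of side 2k+1+a, each codeword
   of {-k,...,k}^n occurs in exactly one chain for every j, whence
   (t+1) |C ∩ {-k,...,k}^n| <= (2k+1+a)^n, and (2k+1+a)^n / (2k+1)^n -> 1. *)

Definition stair (a j i : nat) : nat := minn a (j - a * i).

Lemma sum_stair (a j m : nat) : (\sum_(i < m) stair a j i = minn j (a * m))%N.
Proof.
elim: m => [|m IHm]; first by rewrite big_ord0 muln0 minn0.
by rewrite big_ord_recr /= IHm /stair mulnS; lia.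
Qed.

Lemma stair_le (a j i : nat) : (stair a j i <= a)%N.
Proof. rewrite /stair; lia. Qed.

Lemma leq_stair (a j1 j2 i : nat) : (j1 <= j2)%N -> (stair a j1 i <= stair a j2 i)%N.
Proof. rewrite /stair; lia. Qed.

Lemma stair_eq0 (a j i : nat) : (j <= a * i)%N -> stair a j i = 0%N.
Proof. rewrite /stair; lia. Qed.

Lemma ltn_stair (a j1 j2 : nat) : (0 < a)%N -> (j1 < j2)%N ->
  (stair a j1 (j1 %/ a) < stair a j2 (j1 %/ a))%N.
Proof.
move=> a_gt0 lt_j12; rewrite /stair.
have := divn_eq j1 a; have := ltn_pmod j1 a_gt0; lia.
Qed.

Lemma asym_err_stair (n a h t j1 j2 : nat) :
  (h <= n)%N -> (t <= a * h)%N -> (j1 <= j2 <= t)%N ->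
  asym_err a h t (fun i : 'I_n => (stair a j2 i)%:Z - (stair a j1 i)%:Z).
Proof.
move=> le_hn le_t_ah /andP[le_j12 le_j2t].
have diffE i : (stair a j2 i)%:Z - (stair a j1 i)%:Z = (stair a j2 i - stair a j1 i)%N.
  by rewrite subzn ?leq_stair.
apply/and3P; split.
- apply/forallP => i; rewrite diffE !lez_nat.
  by have := stair_le a j2 i; lia.
- have supp_sub : [set i : 'I_n | (stair a j2 i)%:Z - (stair a j1 i)%:Z != 0]
                    \subset [set widen_ord le_hn i | i : 'I_h].
    apply/subsetP => i; rewrite inE => nz.
    have lt_ih : (i < h)%N.
      rewrite ltnNge; apply/negP => le_hi; move: nz.
      by rewrite !stair_eq0 ?subrr ?eqxx //; nia.
    by apply/imsetP; exists (Ordinal lt_ih); last exact: val_inj.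
  apply: leq_trans (subset_leq_card supp_sub) _.
  by apply: leq_trans (leq_imset_card _ _) _; rewrite card_ord.
- under eq_bigr do rewrite diffE.
  rewrite -(big_morph Posz PoszD (erefl 0%:Z)) lez_nat.
  rewrite -(leq_add2r (\sum_(i < n) stair a j1 i)) -big_split /=.
  under eq_bigr do rewrite subnK ?leq_stair //.
  rewrite !sum_stair.
  have : (a * h <= a * n)%N by rewrite leq_mul2l le_hn orbT.
  lia.
Qed.

Section Chains.

Variables (n a k : nat).

(* The base points w range over {-k-a, ..., k}^n, encoded as in [box_count]. *)
Definition chain (w : {ffun 'I_n -> 'I_(k.*2 + a).+1}) (j : nat) : vec n :=
  [ffun i => (w i)%:Z - k%:Z - a%:Z + (stair a j i)%:Z].

Lemma chain_AED_uniq {h t : nat} {C : pred (vec n)} {w} {j1 j2 : 'I_t.+1} :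
  (0 < a)%N -> (h <= n)%N -> (t <= a * h)%N -> AED a h t C ->
  C (chain w j1) -> C (chain w j2) -> j1 = j2.
Proof.
move=> a_gt0 le_hn le_t_ah aedC.
wlog lt_j12 : j1 j2 / (j1 < j2)%N.
  move=> wlog_lt C1 C2; case: (ltngtP j1 j2) => [lt12|lt21|/val_inj //].
  - exact: wlog_lt.
  - by apply/esym/wlog_lt.
move=> C1 C2; have lt_i_n : (j1 %/ a < n)%N.
  rewrite ltn_divLR //; apply: leq_trans (_ : (h * a <= n * a)%N).
    by have := ltn_ord j2; rewrite mulnC; lia.
  by rewrite leq_mul2r le_hn orbT.
suff : ~~ C (chain w j2) by rewrite C2.
apply: (aedC _ _ C1).
  rewrite /in_Out (_ : (fun i => _) =
                       fun i : 'I_n => (stair a j2 i)%:Z - (stair a j1 i)%:Z).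
    by apply: asym_err_stair; rewrite // ltnW //= -ltnS.
  by apply: functional_extensionality => i; rewrite !ffunE; ring.
apply/eqP => /(congr1 (fun x : vec n => x (Ordinal lt_i_n))).
rewrite !ffunE => /addrI [] /eqP.
by rewrite gtn_eqF ?ltn_stair.
Qed.

(* Shifting by a - s_j maps {0, ..., 2k}^n into {0, ..., 2k+a}^n injectively. *)
Lemma box_count_le_chains (C : pred (vec n)) (j : nat) :
  (box_count C k <= #|[set w | C (chain w j)]|)%N.
Proof.
pose f (v : {ffun 'I_n -> 'I_(k.*2.+1)}) : {ffun 'I_n -> 'I_(k.*2 + a).+1} :=
  [ffun i => inord (v i + a - stair a j i)].
have fE v i : nat_of_ord (f v i) = (v i + a - stair a j i)%N.
  by rewrite ffunE inordK //; have := ltn_ord (v i); have := stair_le a j i; lia.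
have f_inj : injective f.
  move=> v1 v2 f12; apply/ffunP => i; apply: val_inj => /=.
  move: (congr1 (fun g : {ffun 'I_n -> 'I_(k.*2 + a).+1} => nat_of_ord (g i)) f12).
  by rewrite /= !fE; have := stair_le a j i; lia.
rewrite /box_count -(card_imset _ f_inj); apply: subset_leq_card.
apply/subsetP => w /imsetP[v]; rewrite !inE => Cv ->.
congr (C _): Cv; apply/ffunP => i; rewrite [RHS]ffunE fE [LHS]ffunE -subzn; last first.
  by have := stair_le a j i; lia.
by rewrite PoszD; ring.
Qed.

Lemma box_count_le {h t : nat} {C : pred (vec n)} :
  (0 < a)%N -> (h <= n)%N -> (t <= a * h)%N -> AED a h t C ->
  (t.+1 * box_count C k <= (k.*2 + a).+1 ^ n)%N.
Proof.
move=> a_gt0 le_hn le_t_ah aedC.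
have chain_hits w : (\sum_(j < t.+1) C (chain w j) <= 1)%N.
  rewrite -big_mkcond /= sum1dep_card; apply/card_le1_eqP => j1 j2.
  rewrite !inE => C1 C2.
  exact: (chain_AED_uniq a_gt0 le_hn le_t_ah aedC C2 C1).
rewrite -[X in (X * _)%N]card_ord -sum_nat_const.
apply: leq_trans (_ : \sum_(j < t.+1) #|[set w | C (chain w j)]| <= _)%N.
  by apply: leq_sum => j _; exact: box_count_le_chains.
under eq_bigr do rewrite cardE -sum1_size big_enum big_mkcond /=.
rewrite exchange_big /= -[X in (_ <= X ^ _)%N]card_ord -[X in (_ <= _ ^ X)%N]card_ord.
rewrite -card_ffun -sum1_card.
by apply: leq_sum => w _; under eq_bigr do rewrite inE; apply: chain_hits.
Qed.

End Chains.

Lemma expnD_le (N a n : nat) : (a <= N)%N ->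
  (N * (N + a) ^ n <= (N + (2 ^ n - 1) * a) * N ^ n)%N.
Proof.
move=> le_aN; elim: n => [|n IHn]; first by rewrite !expn0; lia.
have pos2n : (1 <= 2 ^ n)%N by rewrite expn_gt0.
move: IHn; rewrite !expnS.
set X := ((N + a) ^ n)%N; set P := (N ^ n)%N; set c := (2 ^ n - 1)%N.
have -> : (2 * 2 ^ n - 1 = 2 * c + 1)%N by rewrite /c; lia.
nia.
Qed.

Lemma ratio_le_of_scaled_bound (R : realFieldType) (b P N T c e : R) :
  0 < P -> 0 < N -> 1 <= T -> 0 < e -> c <= e * N ->
  N * (T * b) <= (N + c) * P -> b / P <= 1 / T + e.
Proof.
move=> P_gt0 N_gt0 T_ge1 e_gt0 le_c_eN le_NTb.
have T_gt0 : 0 < T := lt_le_trans ltr01 T_ge1.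
have le_Tb : T * b <= P + e * P.
  rewrite -(ler_pM2l N_gt0); apply: le_trans le_NTb _.
  by rewrite mulrDr mulrDl lerD2l mulrA [N * e]mulrC ler_wpM2r // ltW.
rewrite ler_pdivrMr //; apply: le_trans (_ : b <= (P + e * P) / T) _.
  by rewrite ler_pdivlMr // mulrC.
rewrite !mulrDl mul1r [T^-1 * P]mulrC lerD2l ler_pdivrMr //.
by rewrite ler_peMr // mulr_ge0 // ltW.
Qed.

Theorem theorem1 (n a h t : nat) (C : pred (vec n)) :
  (0 < n)%N -> (0 < a)%N -> (0 < h)%N -> (0 < t)%N ->
  (h <= n)%N -> (a <= t)%N -> (t <= a * h)%N ->
  AED a h t C ->
  limsup_le (box_ratio C) (1 / (t.+1)%:R).
Proof.
move=> _ a_gt0 _ _ le_hn _ le_t_ah aedC eps eps_gt0.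
set c := (2 ^ n - 1)%N; set d := Num.bound eps^-1.
have lt_inv_d : eps^-1 < d%:R by rewrite archi_boundP // invr_ge0 ltW.
exists (a + c * a * d)%N => k le_Kk; set N := k.*2.+1.
have le_aN : (a <= N)%N by rewrite /N -addnn; lia.
have le_cad_N : (c * a * d <= N)%N by rewrite /N -addnn; lia.
have count : (N * (t.+1 * box_count C k) <= (N + c * a) * N ^ n)%N.
  apply: leq_trans (expnD_le _ _ n le_aN); rewrite leq_mul2l /N addSn.
  by rewrite (box_count_le _ _ _ a_gt0 le_hn le_t_ah aedC) orbT.
have le_1_eps_d : 1 <= eps * d%:R.
  by rewrite -(@ler_pM2l _ eps^-1) ?invr_gt0 // mulr1 mulKf ?gt_eqF // ltW.
rewrite /box_ratio.
apply: (@ratio_le_of_scaled_bound _ _ _ N%:R _ (c * a)%:R).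
all: rewrite ?ltr0n ?ler1n ?expn_gt0 //.
- apply: le_trans (_ : _ <= (c * a)%:R * (eps * d%:R)) _; first exact: ler_peMr.
  by rewrite mulrCA ler_wpM2l ?(ltW eps_gt0) // -natrM ler_nat.
- by rewrite -!natrM -natrD -natrM ler_nat.
Qed.
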